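(* Let $(V,Q)$ be a Lorentz space, $T\in PO(Q)$, and let $W\subseteq V_t$ be a minimal $T$-invariant time-like subspace of $V_t$ (time-like: contains $v$ with $Q(v)<0$; minimal among $T$-invariant time-like subspaces). Then exactly one of the following holds: (i) $V_t=V_1$, $\dim W=1$, and $W$ is spanned by a time-like eigenvector of eigenvalue $1$; (ii) $V_t=V_1$, $\dim W\ge2$, and $\ker(T|_W-I)$ is spanned by a single light-like ($Q(v)=0$, $v\ne0$) eigenvector; (iii) $V_t=V_\lambda\oplus V_{\lambda^{-1}}$ with $\lambda\neq1$ real positive, $\dim W=2$, and $W$ is spanned by two light-like eigenvectors with eigenvalues $\lambda$ and $\lambda^{-1}$.
   Context: Lorentz space: real finite-dimensional $V$ with nondegenerate symmetric bilinear $Q$ of signature $(1,n)$; $PO(Q)$: isometries of $Q$ preserving each component of the time-like cone $\{Q(v)<0\}$. Space-time decomposition: $V_s$ is the sum of the real primary components of $T$ (spaces $\ker p(T)^{\dim V}$, $p$ irreducible factor of the characteristic polynomial) on which $Q$ is positive definite, and $V_t$ the sum of the other primary components. $V_\mu=\ker(T-\mu)^{\dim V}$. *)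

(* V = 'rV[R]_(n.+1) (row vectors), R a real closed field
   (covers the reals of the paper). Q is represented by a symmetric matrix,
   Q(v) = v Q v^T, and T acts on row vectors by v |-> v *m T. *)
From HB Require Import structures.
From mathcomp Require Import all_boot all_order all_algebra.
Set Implicit Arguments. Unset Strict Implicit. Unset Printing Implicit Defensive.
Import Order.TTheory GRing.Theory Num.Theory.
Local Open Scope ring_scope.

Section Lorentz.
Variables (R : rcfType) (n : nat).
Local Notation M := 'M[R]_(n.+1).
Local Notation V := 'rV[R]_(n.+1).

Definition bform (Q : M) (u v : V) : R := (u *m Q *m v^T) 0 0.
Definition qform (Q : M) (v : V) : R := bform Q v v.

Definition lorentz_form (Q : M) : Prop :=
  Q^T = Q /\
  exists P : M, P \in unitmx /\
    P *m Q *m P^T = diag_mx (\row_(i < n.+1) (if i == ord0 then -1 else 1)).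

(* time-like vectors; two time-like vectors lie in the same connected
   component of the time-like cone iff the segment joining them stays in
   the cone (the components are convex). *)
Definition timelike (Q : M) (v : V) : Prop := qform Q v < 0.
Definition lightlike (Q : M) (v : V) : Prop := v != 0 /\ qform Q v = 0.
Definition same_cone_component (Q : M) (v w : V) : Prop :=
  forall t : R, 0 <= t <= 1 -> qform Q ((1 - t) *: v + t *: w) < 0.

Definition in_PO (Q T : M) : Prop :=
  T *m Q *m T^T = Q /\
  forall v : V, timelike Q v -> same_cone_component Q v (v *m T).

Definition primary (T : M) (p : {poly R}) : M :=
  kermx (horner_mx T (p ^+ n.+1)).

Definition gen_eigenspace (T : M) (mu : R) : M := primary T ('X - mu%:P).

Definition posdef_on (Q : M) (S : M) : Prop :=
  forall v : V, (v <= S)%MS -> v != 0 -> 0 < qform Q v.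

Definition char_factor (T : M) (p : {poly R}) : Prop :=
  p \is monic /\ irreducible_poly p /\ p %| char_poly T.

(* Vt is (a matrix whose row space is) the time part V_t of T: the sum of the
   primary components of T on which Q is not positive definite. *)
Definition is_time_part (Q T : M) (Vt : M) : Prop :=
  exists ps : seq {poly R},
    uniq ps /\
    (forall p, p \in ps <-> (char_factor T p /\ ~ posdef_on Q (primary T p))) /\
    (Vt == \sum_(p <- ps) primary T p)%MS.

Definition tl_subspace (Q : M) (W : M) : Prop :=
  exists v : V, (v <= W)%MS /\ timelike Q v.
Definition T_invariant (T W : M) : Prop := stablemx W T.

Definition minimal_inv_timelike (Q T Vt W : M) : Prop :=
  (W <= Vt)%MS /\ T_invariant T W /\ tl_subspace Q W /\
  forall U : M, (U <= Vt)%MS -> T_invariant T U -> tl_subspace Q U ->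
    (U <= W)%MS -> (W <= U)%MS.

End Lorentz.

From HB Require Import structures.
From mathcomp Require Import all_boot all_order all_algebra.
From mathcomp Require Import ring.
Import Order.TTheory GRing.Theory Num.Theory.
Local Open Scope ring_scope.

(* The key fact is that T has a real eigenvector in W.  In a basis of W the
   Gram matrix G of Q has negative determinant (a negative vector whose
   orthogonal complement is positive definite), and for an isometry A of G
   the skew matrix (A + 1) G (A - 1)^T has nonnegative determinant; hence
   det (A + 1) det (A - 1) <= 0 and A has a real eigenvalue in [-1, 1].
   Lorentz geometry then sorts such an eigenvector x: minimality forbids x
   space-like; a time-like x is fixed and spans W (case i); a light-like
   fixed x is the only fixed direction of W (case ii); a light-like x with
   eigenvalue lam != 1 spans W together with an eigenvector for lam^-1
   (case iii).  The time part V_t is identified by showing that every other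
   primary component is orthogonal to these eigenvectors, hence space-like. *)

Set Implicit Arguments. Unset Strict Implicit. Unset Printing Implicit Defensive.

Section GramForm.
Variables (R : rcfType) (k : nat).
Implicit Types (G : 'M[R]_k) (x y z : 'rV[R]_k) (a : R).

(* The bilinear form x G y^T attached to a Gram matrix G of any size; on
   'rV_(n.+1) it is [bform].  General sizes are needed for the form
   restricted to a subspace, expressed in a basis of it. *)
Definition gform G x y : R := (x *m G *m y^T) 0 0.

Lemma gformDl G x y z : gform G (x + y) z = gform G x z + gform G y z.
Proof. by rewrite /gform !mulmxDl mxE. Qed.

Lemma gformZl G a x z : gform G (a *: x) z = a * gform G x z.
Proof. by rewrite /gform -!scalemxAl mxE. Qed.

Lemma gformDr G x y z : gform G z (x + y) = gform G z x + gform G z y.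
Proof. by rewrite /gform linearD /= mulmxDr mxE. Qed.

Lemma gformZr G a x z : gform G z (a *: x) = a * gform G z x.
Proof. by rewrite /gform linearZ /= -scalemxAr mxE. Qed.

Lemma gformBl G x y z : gform G (x - y) z = gform G x z - gform G y z.
Proof. by rewrite gformDl -scaleN1r gformZl mulN1r. Qed.

Lemma gformBr G x y z : gform G z (x - y) = gform G z x - gform G z y.
Proof. by rewrite gformDr -scaleN1r gformZr mulN1r. Qed.

Lemma gform0l G z : gform G 0 z = 0.
Proof. by rewrite /gform !mul0mx mxE. Qed.

Lemma gformC G x y : G^T = G -> gform G x y = gform G y x.
Proof.
move=> sG; rewrite /gform -{1}(trmxK (x *m G *m y^T)) mxE.
by rewrite !trmx_mul trmxK sG mulmxA.
Qed.

Lemma gformGD (G1 G2 : 'M[R]_k) x y :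
  gform (G1 + G2) x y = gform G1 x y + gform G2 x y.
Proof. by rewrite /gform mulmxDr mulmxDl mxE. Qed.

Lemma gformGZ G a x y : gform (a *: G) x y = a * gform G x y.
Proof. by rewrite /gform -scalemxAr -scalemxAl mxE. Qed.

Lemma gform1_gt0 y : y != 0 -> 0 < gform 1 y y.
Proof.
move=> nz; rewrite /gform mulmx1 mxE.
have [j yj] : exists j, y 0 j != 0.
  apply/existsP; move: nz; apply: contraR; rewrite negb_exists => /forallP H.
  apply/eqP/matrixP => i l; rewrite (ord1 i) mxE; exact/eqP/negPn/H.
rewrite (bigD1 j) //= mxE ltr_pwDl ?sumr_ge0 // => [|i _]; last first.
  by rewrite mxE -expr2 sqr_ge0.
by rewrite -expr2 lt0r sqr_ge0 sqrf_eq0 yj.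
Qed.

Lemma gform_skew G y : G^T = - G -> gform G y y = 0.
Proof.
move=> sG; have : gform G y y = - gform G y y.
  rewrite /gform -{1}(trmxK (y *m G *m y^T)) mxE !trmx_mul trmxK sG.
  by rewrite mulNmx mulmxN mulmxA mxE.
move/eqP; rewrite -subr_eq0 opprK -mulr2n -mulr_natl mulf_eq0 pnatr_eq0 /=.
exact/eqP.
Qed.

Lemma gform_orth_split G z s a : G^T = G -> gform G z s = 0 ->
  gform G (z + a *: s) (z + a *: s) = gform G z z + a * (a * gform G s s).
Proof.
move=> sG hz; rewrite gformDl !gformDr !gformZl !gformZr (gformC s z sG) hz.
by rewrite !mulr0 !addr0 add0r.
Qed.

End GramForm.

Section DeterminantSigns.
Variable R : rcfType.
Implicit Types (k : nat).

Definition det_pencil k (P0 P1 : 'M[R]_k) : {poly R} :=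
  \det (map_mx polyC P0 + 'X *: map_mx polyC P1).

Lemma det_pencilE k (P0 P1 : 'M[R]_k) s :
  (det_pencil P0 P1).[s] = \det (P0 + s *: P1).
Proof.
rewrite /det_pencil -horner_evalE -det_map_mx; congr (\det _).
apply/matrixP => i j; rewrite !mxE /= horner_evalE.
by rewrite hornerD hornerC mulrC hornerMX hornerC mulrC.
Qed.

Lemma poly_ivt_sign (f : {poly R}) a b : a <= b -> f.[a] * f.[b] <= 0 ->
  exists2 x, a <= x <= b & root f x.
Proof.
move=> ab hf; have [ha|ha] := leP f.[a] 0.
  have [hb|hb] := leP 0 f.[b]; first by apply: (poly_ivt ab); rewrite ha hb.
  exists a; first by rewrite lexx ab.
  by move: hf; rewrite nmulr_lle0 // => ha'; rewrite rootE eq_le ha ha'.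
have hb : f.[b] <= 0 by move: hf; rewrite pmulr_rle0.
have [|x xab rx] := @poly_ivt R (- f) a b ab.
  by rewrite !hornerN oppr_le0 oppr_ge0 hb (ltW ha).
by exists x => //; move: rx; rewrite /root hornerN oppr_eq0.
Qed.

Lemma poly_sign_persists (f : {poly R}) : 0 < f.[0] ->
  (forall s, 0 <= s -> s < 1 -> f.[s] != 0) -> 0 <= f.[1].
Proof.
move=> f0 H; rewrite leNgt; apply/negP => f1.
have [|x /andP[x0 x1] rx] := @poly_ivt_sign f 0 1 ler01.
  by rewrite pmulr_rle0 // ltW.
move: x1; rewrite le_eqVlt => /orP[/eqP x1|x1].
  by move: rx f1; rewrite -x1 rootE => /eqP->; rewrite ltxx.
by move: (H x x0 x1); rewrite -rootE rx.
Qed.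

Lemma posdef_unitmx k (M : 'M[R]_k) :
  (forall y, y != 0 -> 0 < gform M y y) -> M \in unitmx.
Proof.
move=> H; rewrite unitmxE unitfE; apply/negP => /det0P [v nz vM].
by have := H v nz; rewrite /gform vM mul0mx mxE ltxx.
Qed.

Lemma gform_homotopy_gt0 k (M : 'M[R]_k) s y : y != 0 -> 0 <= s -> s < 1 ->
  0 <= gform M y y -> 0 < gform (1%:M + s *: (M - 1%:M)) y y.
Proof.
move=> nz s0 s1 My.
have -> : gform (1%:M + s *: (M - 1%:M)) y y =
          (1 - s) * gform 1%:M y y + s * gform M y y.
  rewrite gformGD gformGZ gformGD -scaleN1r gformGZ.
  by rewrite mulrBl mul1r mulrDr mulrA mulrN1 mulNr addrCA addrC -!addrA.
by apply: ltr_pwDl; [rewrite mulr_gt0 ?subr_gt0 ?gform1_gt0 | rewrite mulr_ge0].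
Qed.

(* Along the segment from 1 to a semidefinite M, the determinant never
   vanishes before M, hence det M >= 0. *)
Lemma semidef_det_ge0 k (M : 'M[R]_k) : (forall y, 0 <= gform M y y) ->
  0 <= \det M.
Proof.
move=> H; have := poly_sign_persists (f := det_pencil 1%:M (M - 1%:M)).
rewrite !det_pencilE scale0r addr0 det1 scale1r (addrC 1%:M) subrK.
apply=> // s s0 s1; rewrite det_pencilE -unitfE -unitmxE.
by apply: posdef_unitmx => y nz; apply: gform_homotopy_gt0.
Qed.

Lemma posdef_det_gt0 k (M : 'M[R]_k) :
  (forall y, y != 0 -> 0 < gform M y y) -> 0 < \det M.
Proof.
move=> H; rewrite lt0r semidef_det_ge0 ?andbT; last first.
  by move=> y; have [->|/H/ltW//] := eqVneq y 0; rewrite gform0l.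
by rewrite -unitfE -unitmxE posdef_unitmx.
Qed.

Lemma skew_det_ge0 k (N : 'M[R]_k) : N^T = - N -> 0 <= \det N.
Proof. by move=> sN; apply: semidef_det_ge0 => y; rewrite gform_skew. Qed.

Lemma det_rank1 k (u v : 'rV[R]_k) :
  \det (1%:M + u^T *m v) = 1 + (v *m u^T) 0 0.
Proof.
set X := block_mx (1%:M : 'M_1) (- v) u^T (1%:M : 'M_k).
have e1 : X = block_mx 1%:M 0 u^T 1%:M *m block_mx 1%:M (-v) 0 (1%:M + u^T *m v).
  rewrite mulmx_block !mul1mx !mulmx0 !mul0mx ?addr0 ?add0r !mulmx1 mulmxN.
  by rewrite addrCA addNr addr0.
have e2 : X = block_mx (1%:M + v *m u^T) (-v) 0 1%:M *m block_mx 1%:M 0 u^T 1%:M.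
  rewrite mulmx_block !mul1mx !mulmx0 !mul0mx ?addr0 ?add0r !mulmx1 mulNmx.
  by rewrite addrK.
have := e2; rewrite e1 => /(congr1 determinant).
rewrite !det_mulmx (det_lblock (1%:M : 'M_1)) (det_ublock (1%:M : 'M_1)).
rewrite (det_ublock (1%:M + v *m u^T)) !det1 !mul1r !mulr1 => ->.
by rewrite det_mx11 !mxE.
Qed.

(* A symmetric form with a negative vector s, positive definite on the
   orthogonal complement of s, has negative determinant: composing G with the
   rank-one correction G (1 - 2 s^T s G / q(s)) (the Gram matrix of the form
   reflected in s) flips the sign of the determinant and yields a positive
   definite form. *)
Lemma lorentz_gram_det_lt0 k (G : 'M[R]_k) (s : 'rV[R]_k) : G^T = G ->
  gform G s s < 0 ->
  (forall y, y != 0 -> gform G y s = 0 -> 0 < gform G y y) -> \det G < 0.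
Proof.
move=> sG qneg H; set q := gform G s s.
have q0 : q != 0 := ltr0_neq0 qneg.
set u := (- (2 / q)) *: s; set v := s *m G.
have det_flip : \det (G *m (1%:M + u^T *m v)) = - \det G.
  rewrite det_mulmx det_rank1 /v /u linearZ /= -scalemxAr mxE -/(gform G s s).
  rewrite -/q mulNr divfK // -[2]/(1 + 1 : R) opprD addrA subrr add0r.
  by rewrite mulrN1.
have form_flip y : gform (G *m (1%:M + u^T *m v)) y y =
                   gform G y y - 2 / q * gform G y s * gform G y s.
  rewrite mulmxDr mulmx1 gformGD; congr (_ + _).
  rewrite /gform (_ : y *m _ *m y^T = (y *m G *m u^T) *m (v *m y^T)).
    rewrite mxE big_ord1 -/(gform G y u) /u gformZr /v -/(gform G s y).
    by rewrite (gformC s y sG) !mulNr.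
  by rewrite !mulmxA.
have pos y : y != 0 -> 0 < gform (G *m (1%:M + u^T *m v)) y y.
  move=> nz; rewrite form_flip; set b := gform G y s.
  have [b0|b0] := eqVneq b 0; first by rewrite b0 mulr0 subr0; apply: H.
  set z := y - (b / q) *: s.
  have hz : gform G z s = 0 by rewrite /z gformBl gformZl divfK // subrr.
  have hy : gform G y y = gform G z z + b / q * b.
    have ey : y = z + (b / q) *: s by rewrite /z subrK.
    by rewrite {1 2}ey gform_orth_split // divfK.
  have Qz : 0 <= gform G z z.
    by have [->|/H/(_ hz)/ltW//] := eqVneq z 0; rewrite gform0l.
  have w_lt0 : b / q * b < 0.
    by rewrite mulrAC pmulr_rlt0 ?invr_lt0 // -expr2 lt0r sqr_ge0 sqrf_eq0 b0.
  have -> : 2 / q * b * b = b / q * b + b / q * b by ring.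
  rewrite hy opprD addrA addrK.
  by apply: ltr_wpDl => //; rewrite oppr_gt0.
by have := posdef_det_gt0 pos; rewrite det_flip oppr_gt0.
Qed.

(* N = (A + 1) G (A - 1)^T = G A^T - A G is skew, so
   det (A + 1) det (A - 1) det G = det N >= 0; hence det (A + 1) and
   det (A - 1) have opposite signs and det (x - A) has a root in [-1, 1]. *)
Lemma isometry_real_eigenvector k (G A : 'M[R]_k) : G^T = G -> \det G < 0 ->
  A *m G *m A^T = G -> exists mu, exists2 y : 'rV[R]_k, y != 0 & y *m A = mu *: y.
Proof.
move=> sG dG iso; set N := (A + 1%:M) *m G *m (A - 1%:M)^T.
have eN : N = G *m A^T - A *m G.
  rewrite /N linearB /= trmx1 mulmxBr mulmx1 !mulmxDl !mul1mx iso.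
  by rewrite [A *m G + G]addrC opprD addrA [G + G *m A^T]addrC addrK.
have sN : N^T = - N by rewrite eN linearB /= !trmx_mul trmxK sG opprB.
have hp : \det (A + 1%:M) * \det (A - 1%:M) <= 0.
  by move: (skew_det_ge0 sN); rewrite /N !det_mulmx det_tr mulrAC nmulr_lge0.
set f := det_pencil (- A) 1%:M.
have f1 : f.[1] = (-1) ^+ k * \det (A - 1%:M).
  by rewrite /f det_pencilE scale1r -detZ scaleN1r opprB addrC.
have fm1 : f.[-1] = (-1) ^+ k * \det (A + 1%:M).
  by rewrite /f det_pencilE scaleN1r -detZ scaleN1r opprD.
have [x _ rx] : exists2 x, -1 <= x <= 1 & root f x.
  apply: poly_ivt_sign; first by rewrite (le_trans _ ler01) // lerN10.
  by rewrite f1 fm1 mulrACA -exprD -signr_odd oddD addbb /= mul1r.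
move: rx; rewrite /root /f det_pencilE => /det0P [y nz yA]; exists x, y => //.
move: yA; rewrite mulmxDr mulmxN -scalemxAr mulmx1 => /eqP.
by rewrite addrC subr_eq0 => /eqP <-.
Qed.

End DeterminantSigns.

Section LorentzGeometry.
Variables (R : rcfType) (n : nat) (Q : 'M[R]_(n.+1)).
Hypothesis LQ : lorentz_form Q.
Local Notation V := 'rV[R]_(n.+1).
Implicit Types (x y z t u v w : V).

Lemma lorentz_sym : Q^T = Q. Proof. by case: LQ. Qed.

Lemma bformE x y : bform Q x y = gform Q x y. Proof. by []. Qed.
Lemma qformE x : qform Q x = gform Q x x. Proof. by []. Qed.

Lemma bformC x y : bform Q x y = bform Q y x.
Proof. exact: (gformC x y lorentz_sym). Qed.

Lemma qformZ a x : qform Q (a *: x) = a * (a * qform Q x).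
Proof. by rewrite qformE gformZl gformZr. Qed.

Lemma sub_orth_kermx y x : (y <= kermx (Q *m x^T))%MS = (bform Q y x == 0).
Proof.
rewrite sub_kermx mulmxA /bform /gform; apply/eqP/eqP => [->|h]; first by rewrite mxE.
by apply/matrixP => i j; rewrite !ord1 h mxE.
Qed.

Lemma lorentz_timelike_exists : exists t : V, qform Q t < 0.
Proof.
case: LQ => _ [P [uP eP]]; exists (delta_mx 0 0 *m P).
rewrite /qform /bform /gform trmx_mul !mulmxA -(mulmxA (delta_mx 0 0)).
rewrite -(mulmxA (delta_mx 0 0)) eP trmx_delta -colE -rowE !mxE eqxx mulr1n.
exact: ltrN10.
Qed.

Lemma lorentz_pos_hyperplane : exists e : 'cV[R]_(n.+1),
  forall x, (x *m e) 0 0 = 0 -> x != 0 -> 0 < qform Q x.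
Proof.
case: LQ => _ [P [uP eP]]; exists (invmx P *m delta_mx 0 0) => x x0 nz.
set z := x *m invmx P.
have ex : x = z *m P by rewrite /z mulmxKV.
have z0 : z 0 0 = 0 by move: x0; rewrite mulmxA -/z -colE mxE.
clearbody z.
have zD : z *m diag_mx (\row_(i < n.+1) (if i == ord0 then -1 else 1)) = z.
  apply/matrixP => i j; rewrite mul_mx_diag !mxE (ord1 i).
  by case: (j =P ord0) => [->|_]; rewrite ?z0 ?mul0r ?mulr1.
have -> : qform Q x = gform 1%:M z z.
  rewrite /qform /bform /gform ex trmx_mul !mulmxA -(mulmxA z) -(mulmxA z) eP.
  by rewrite zD mulmx1.
by apply: gform1_gt0; apply: contraNneq nz => z_0; rewrite ex z_0 mul0mx.
Qed.

(* Two orthogonal non-space-like vectors are proportional: their suitable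
   combination lies in the positive hyperplane yet is non-space-like. *)
Lemma nonspacelike_orth_colinear x y : x != 0 -> qform Q x <= 0 ->
  qform Q y <= 0 -> bform Q x y = 0 -> exists a, y = a *: x.
Proof.
move=> nz qx qy bxy; have [e He] := lorentz_pos_hyperplane.
set ex := x *m e; set ey := y *m e; set cx := ex 0 0; set cy := ey 0 0.
have cx0 : cx != 0 by apply: contraTneq qx => h; rewrite -ltNge He.
set u := cy *: x + (- cx) *: y.
have ue : (u *m e) 0 0 = 0.
  by rewrite /u /cx /cy /ex /ey mulmxDl -!scalemxAl !mxE mulNr mulrC subrr.
have qu : qform Q u <= 0.
  rewrite qformE /u gform_orth_split ?lorentz_sym //; last first.
    by rewrite gformZl -bformE bxy mulr0.
  rewrite gformZl gformZr -!qformE !mulrA -!expr2.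
  by rewrite -(addr0 0) lerD // mulr_ge0_le0 // sqr_ge0.
have u0 : u = 0 by apply: contraTeq qu => /(He u ue); rewrite ltNge.
exists (cy / cx); apply/eqP; rewrite -(can_eq (scalerK cx0)) scalerA.
by rewrite mulrC divfK //; move: u0; rewrite /u scaleNr => /eqP; rewrite subr_eq0 eq_sym.
Qed.

Lemma lightlike_orth_colinear x y : x != 0 -> qform Q x = 0 ->
  qform Q y = 0 -> bform Q x y = 0 -> exists a, y = a *: x.
Proof.
by move=> nz qx qy; apply: nonspacelike_orth_colinear; rewrite ?qx ?qy.
Qed.

Lemma orth_timelike_gt0 t x : qform Q t < 0 -> bform Q x t = 0 -> x != 0 ->
  0 < qform Q x.
Proof.
move=> qt bxt nz; rewrite ltNge; apply/negP => qx.
have [a ea] := nonspacelike_orth_colinear nz qx (ltW qt) bxt.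
move: qt bxt; rewrite ea bformE qformZ gformZr -bformE -/(qform Q x) => qt.
by move/eqP; rewrite mulf_eq0 => /orP[] /eqP h; move: qt; rewrite h ?mul0r ?mulr0 ltxx.
Qed.

Lemma timelike_pair_neq0 t x : qform Q t < 0 -> x != 0 -> qform Q x <= 0 ->
  bform Q x t != 0.
Proof.
move=> qt nz qx; apply/eqP => b0.
by have := orth_timelike_gt0 qt b0 nz; rewrite ltNge qx.
Qed.

Lemma lightlike_pair_timelike x y : qform Q x = 0 -> qform Q y = 0 ->
  bform Q x y != 0 -> qform Q (x + (- bform Q x y) *: y) < 0.
Proof.
move=> qx qy bxy; rewrite qformE gformDl !gformDr !gformZl !gformZr.
rewrite -!qformE -!bformE qx qy (bformC y x) !mulr0 !add0r !addr0 mulNr.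
rewrite -opprD oppr_lt0 -mulr2n mulrn_wgt0 // -expr2 lt0r sqr_ge0 sqrf_eq0 bxy.
by [].
Qed.

Lemma lightlike_multiple_timelike x z a : x = a *: z -> qform Q x = 0 ->
  qform Q z < 0 -> x = 0.
Proof.
move=> -> /eqP; rewrite qformZ !mulf_eq0 orbA orbb => /orP[/eqP->|/eqP->].
  by rewrite scale0r.
by rewrite ltxx.
Qed.

(* Vectors a, b in the same component of the time-like cone pair with the
   same sign against any nonzero non-space-like x: otherwise the pairing
   would vanish at some point of the segment [a, b]. *)
Lemma cone_component_sign a b x : same_cone_component Q a b -> x != 0 ->
  qform Q x <= 0 -> 0 < bform Q a x * bform Q b x.
Proof.
move=> cab nz qx; set al := bform Q a x; set be := bform Q b x.
rewrite ltNge; apply/negP => hp.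
set f := al%:P + (be - al)%:P * 'X.
have fE s : f.[s] = (1 - s) * al + s * be.
  by rewrite /f hornerD hornerC hornerCM hornerX; ring.
have [tau /andP[t0 t1] rt] : exists2 tau, 0 <= tau <= 1 & root f tau.
  by apply: poly_ivt_sign; rewrite ?ler01 // !fE subr0 subrr !mul1r !mul0r addr0 add0r.
have := cab tau; rewrite t0 t1 => /(_ isT) /timelike_pair_neq0 /(_ nz qx).
rewrite bformC bformE gformDl !gformZl -!bformE -/al -/be.
by move: rt; rewrite rootE fE => ->.
Qed.

End LorentzGeometry.

Lemma pos_sqr_eq1 (R : realDomainType) (m : R) : 0 < m -> m * m = 1 -> m = 1.
Proof.
move=> mp /eqP; rewrite -expr2 sqrf_eq1 => /orP[/eqP //|/eqP m1].
by move: mp; rewrite m1 ltr0N1.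
Qed.

Lemma pos_neq_inv (R : realFieldType) (m : R) : 0 < m -> m != 1 -> m != m^-1.
Proof.
move=> mp; apply: contra => /eqP h; apply/eqP/pos_sqr_eq1 => //.
by rewrite {2}h divff // gt_eqF.
Qed.

Lemma mulmx_horner_eigvec (R : comNzRingType) (k : nat) (T : 'M[R]_k.+1)
    (x : 'rV[R]_k.+1) mu (p : {poly R}) :
  x *m T = mu *: x -> x *m horner_mx T p = p.[mu] *: x.
Proof.
move=> ex; elim/poly_ind: p => [|p c IH].
  by rewrite rmorph0 mulmx0 horner0 scale0r.
rewrite rmorphD rmorphM /= horner_mx_X horner_mx_C mulmxDr mulmxA IH.
by rewrite -scalemxAl ex scalerA mul_mx_scalar hornerMXaddC scalerDl.
Qed.

Lemma stable_rowsP (R : fieldType) (m k : nat) (U : 'M[R]_(m, k))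
    (T : 'M[R]_k) :
  (forall y : 'rV[R]_k, (y <= U)%MS -> (y *m T <= U)%MS) -> (U *m T <= U)%MS.
Proof. by move=> H; apply/row_subP => i; rewrite row_mul; apply/H/row_sub. Qed.

Section Isometry.
Variables (R : rcfType) (n : nat) (Q T : 'M[R]_(n.+1)).
Hypothesis LQ : lorentz_form Q.
Hypothesis PO : in_PO Q T.
Local Notation V := 'rV[R]_(n.+1).
Implicit Types (x y u v w : V) (mu : R).

Lemma iso_bform u v : bform Q (u *m T) (v *m T) = bform Q u v.
Proof.
case: PO => iso _.
by rewrite /bform /gform trmx_mul !mulmxA -(mulmxA u) -(mulmxA u) iso.
Qed.

Lemma iso_qform u : qform Q (u *m T) = qform Q u.
Proof. exact: iso_bform. Qed.

Lemma eigvec_qform x mu : x *m T = mu *: x -> mu * (mu * qform Q x) = qform Q x.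
Proof. by move=> ex; rewrite -qformZ -ex iso_qform. Qed.

Lemma eigvec_lightlike x mu : x *m T = mu *: x -> mu * mu != 1 ->
  qform Q x = 0.
Proof.
move=> /eigvec_qform e mm; apply/eqP; move/eqP: e.
rewrite mulrA -subr_eq0 -{2}(mul1r (qform Q x)) -mulrBl mulf_eq0 subr_eq0.
by rewrite (negbTE mm).
Qed.

Lemma bform_horner_eigvec x y mu (p : {poly R}) : mu != 0 -> x *m T = mu *: x ->
  bform Q (y *m horner_mx T p) x = p.[mu^-1] * bform Q y x.
Proof.
move=> mu0 ex.
have bT z : bform Q (z *m T) x = mu^-1 * bform Q z x.
  have := iso_bform z x; rewrite ex bformE gformZr -bformE => <-.
  by rewrite mulrA mulVf // mul1r.
elim/poly_ind: p => [|p c IH].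
  by rewrite rmorph0 mulmx0 horner0 mul0r bformE gform0l.
rewrite rmorphD rmorphM /= horner_mx_X horner_mx_C mulmxDr mulmxA mul_mx_scalar.
rewrite bformE gformDl gformZl -!bformE bT IH hornerMXaddC mulrDl.
by rewrite mulrA (mulrC _ (p.[_])).
Qed.

Lemma bform_eigvec x y mu : mu != 0 -> x *m T = mu *: x ->
  bform Q (y *m T) x = mu^-1 * bform Q y x.
Proof.
by move=> mu0 ex; have := bform_horner_eigvec y 'X mu0 ex; rewrite horner_mx_X hornerX.
Qed.

(* T preserves the time-like cone components, so a non-space-like
   eigenvector has a positive eigenvalue: its pairings with t and t T have
   the same sign. *)
Lemma eigval_gt0 x mu : x != 0 -> qform Q x <= 0 -> x *m T = mu *: x -> 0 < mu.
Proof.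
move=> nz qx ex; have [t qt] := lorentz_timelike_exists LQ.
have := cone_component_sign LQ (PO.2 t qt) nz qx.
have := iso_bform t x; rewrite ex bformE gformZr -bformE => <-.
rewrite -mulrA -expr2 => h; rewrite ltNge; apply/negP => m0; move: h.
by rewrite ltNge mulr_le0_ge0 // sqr_ge0.
Qed.

Lemma timelike_eigval x mu : qform Q x < 0 -> x *m T = mu *: x -> mu = 1.
Proof.
move=> qx ex; have nz : x != 0 by apply: contraTneq qx => ->; rewrite qformE gform0l ltxx.
apply: pos_sqr_eq1; first exact: eigval_gt0 nz (ltW qx) ex.
by apply: (mulIf (ltr0_neq0 qx)); rewrite -mulrA eigvec_qform // mul1r.
Qed.

(* Light-like eigenvectors for eigenvalues lam and lam^-1 with lam^2 != 1
   cannot be orthogonal: they would be proportional. *)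
Lemma eigvec_pair_nonorth u w lam : lam != 0 -> lam * lam != 1 ->
  u != 0 -> w != 0 -> qform Q u = 0 -> qform Q w = 0 ->
  u *m T = lam *: u -> w *m T = lam^-1 *: w -> bform Q u w != 0.
Proof.
move=> l0 ll nu nw qu qw eu ew; apply/eqP => b0.
have [a ea] := lightlike_orth_colinear LQ nu qu qw b0.
move: ew; rewrite ea -scalemxAl eu !scalerA mulrC => /eqP.
rewrite -subr_eq0 -scalerBl scaler_eq0 (negbTE nu) orbF subr_eq0 => /eqP h.
have a0 : a = 0.
  apply: contraNeq ll => a0; move/(mulIf a0): h => h.
  by rewrite {1}h mulVf.
by move: nw; rewrite ea a0 scale0r eqxx.
Qed.

End Isometry.

Section MinimalSubspace.
Variables (R : rcfType) (n : nat) (Q T Vt W : 'M[R]_(n.+1)).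
Hypothesis LQ : lorentz_form Q.
Hypothesis PO : in_PO Q T.
Hypothesis MIN : minimal_inv_timelike Q T Vt W.
Local Notation V := 'rV[R]_(n.+1).
Implicit Types (x y z t u w : V) (mu : R).

Lemma W_stable x : (x <= W)%MS -> (x *m T <= W)%MS.
Proof. by case: MIN => _ [st _] xW; apply: submx_trans st; apply: submxMr. Qed.

Lemma W_timelike : exists2 t, (t <= W)%MS & qform Q t < 0.
Proof. by case: MIN => _ [_ [[t [tW tt]] _]]; exists t. Qed.

(* Minimality, for an invariant subspace given by any spanning matrix. *)
Lemma W_minimal m (U : 'M[R]_(m, n.+1)) : (U *m T <= U)%MS ->
  (exists2 v, (v <= U)%MS & qform Q v < 0) -> (U <= W)%MS -> (W <= U)%MS.
Proof.
case: MIN => sWV [_ [_ Hmin]] sU [v vU tv] UW.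
rewrite -(genmxE U); apply: Hmin.
- by rewrite genmxE (submx_trans UW).
- by rewrite /T_invariant (eqmxMr T (genmxE U)) !genmxE.
- by exists v; rewrite genmxE.
- by rewrite genmxE.
Qed.

Lemma timelike_eigvec_spans x mu : (x <= W)%MS -> x *m T = mu *: x ->
  qform Q x < 0 -> (W <= x)%MS.
Proof.
by move=> xW ex qx; apply: W_minimal => //; [rewrite ex scalemx_sub | exists x].
Qed.

(* W has no space-like eigenvector x: the invariant subspace of W orthogonal
   to x would still contain a time-like vector (the projection of one), so
   by minimality it would be all of W, and x would be orthogonal to itself. *)
Lemma no_spacelike_eigvec x mu : (x <= W)%MS -> x *m T = mu *: x ->
  ~ 0 < qform Q x.
Proof.
move=> xW ex qx.
have mu0 : mu != 0.
  apply: contraTneq qx => m0; move: (iso_qform PO x).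
  by rewrite ex m0 scale0r qformE gform0l => <-; rewrite ltxx.
set U := (W :&: kermx (Q *m x^T))%MS.
have inU y : (y <= U)%MS = (y <= W)%MS && (bform Q y x == 0).
  by rewrite sub_capmx sub_orth_kermx.
have [t tW qt] := W_timelike.
have WU : (W <= U)%MS.
  apply: W_minimal; last exact: capmxSl.
  - apply: stable_rowsP => y; rewrite !inU => /andP[yW /eqP byx].
    by rewrite W_stable //= (bform_eigvec PO _ mu0 ex) byx mulr0.
  - exists (t - (bform Q t x / qform Q x) *: x).
      rewrite inU (addmx_sub tW) ?eqmx_opp ?scalemx_sub //= bformE gformBl.
      by rewrite gformZl -!bformE divfK ?subrr // lt0r_neq0.
    rewrite qformE gformBl !gformBr !gformZl !gformZr -!qformE -!bformE.
    rewrite (bformC LQ x t) divfK ?lt0r_neq0 // subrr subr0.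
    apply: le_lt_trans qt; rewrite gerBl mulrAC divr_ge0 ?(ltW qx) //.
    by rewrite -expr2 sqr_ge0.
have := submx_trans xW WU; rewrite inU => /andP[_ /eqP h].
by move: qx; rewrite /qform h ltxx.
Qed.

(* T restricted to W has a real eigenvector: in a basis B of W, the Gram
   matrix of Q is of Lorentz type, so [isometry_real_eigenvector] applies
   to the matrix of T|_W. *)
Lemma W_eigvec : exists x mu, [/\ x != 0, (x <= W)%MS & x *m T = mu *: x].
Proof.
set B := row_base W.
have sB : (B *m T <= B)%MS by case: MIN => _ [st _]; rewrite stablemx_row_base.
have nzB (y : 'rV_(\rank W)) : y != 0 -> y *m B != 0 by rewrite mulmx_free_eq0 ?row_base_free.
have eB : (B :=: W)%MS := eq_row_base W.
clearbody B.
set A := B *m T *m pinvmx B.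
have AB : A *m B = B *m T by rewrite /A mulmxKpV.
set G := B *m Q *m B^T.
have gG (y z : 'rV_(\rank W)) : gform G y z = bform Q (y *m B) (z *m B).
  by rewrite /bform /gform /G trmx_mul !mulmxA.
have sG : G^T = G by rewrite /G !trmx_mul trmxK (lorentz_sym LQ) mulmxA.
have iso : A *m G *m A^T = G.
  rewrite /G !mulmxA AB -!mulmxA -trmx_mul AB trmx_mul !mulmxA.
  by case: PO => h _; rewrite -(mulmxA B T) -(mulmxA B) h.
have [t tW qt] := W_timelike.
have [s es] : exists s, t = s *m B by apply/submxP; rewrite eB.
have dG : \det G < 0.
  apply: (lorentz_gram_det_lt0 (s := s) sG); first by rewrite gG -es.
  move=> y nz; rewrite !gG -es => b0.
  exact: (orth_timelike_gt0 LQ qt b0 (nzB _ nz)).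
have [mu [y nz yA]] := isometry_real_eigenvector sG dG iso.
exists (y *m B), mu; split; first exact: nzB.
  by rewrite -eB submxMl.
by rewrite -mulmxA -AB mulmxA yA scalemxAl.
Qed.

(* If W contains a nonzero light-like vector x, it has no time-like
   eigenvector, since such a vector would span W and x would be a multiple
   of it. *)
Lemma lightlike_no_timelike_eigvec x z mu : (x <= W)%MS -> x != 0 ->
  qform Q x = 0 -> (z <= W)%MS -> z *m T = mu *: z -> ~ qform Q z < 0.
Proof.
move=> xW nz qx zW ez qz; have := submx_trans xW (timelike_eigvec_spans zW ez qz).
case/sub_rVP => a ea; have := lightlike_multiple_timelike ea qx qz.
by apply/eqP.
Qed.

Lemma lightlike_rank_ge2 x : (x <= W)%MS -> x != 0 -> qform Q x = 0 ->
  (2 <= \rank W)%N.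
Proof.
move=> xW nz qx; have [t tW qt] := W_timelike; rewrite leqNgt; apply/negP => r1.
have t0 : t != 0 by apply: contraTneq qt => ->; rewrite qformE gform0l ltxx.
have Wt : (W <= t)%MS.
  case: (mxrank_leqif_sup tW) => _ <-.
  by rewrite eqn_leq mxrankS //= rank_rV t0 -ltnS.
have := submx_trans xW Wt; case/sub_rVP => a ea.
by have := lightlike_multiple_timelike ea qx qt; apply/eqP.
Qed.

(* If W contains a fixed light-like vector x, every fixed vector of W is a
   multiple of x: a fixed vector is not space-like, not time-like, and if
   light-like but not orthogonal to x it would combine with x into a fixed
   time-like vector. *)
Lemma fixed_sub_lightlike x y : (x <= W)%MS -> x != 0 -> qform Q x = 0 ->
  x *m T = x -> (y <= W)%MS -> y *m T = y -> (y <= x)%MS.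
Proof.
move=> xW nz qx ex yW ey.
have fixed z : z *m T = z -> z *m T = 1 *: z by rewrite scale1r.
have [->|ny] := eqVneq y 0; first exact: sub0mx.
case: (ltgtP (qform Q y) 0) => qy.
- by case: (lightlike_no_timelike_eigvec xW nz qx yW (fixed _ ey) qy).
- by case: (no_spacelike_eigvec yW (fixed _ ey) qy).
have [bxy|bxy] := eqVneq (bform Q x y) 0.
  by have [a ->] := lightlike_orth_colinear LQ nz qx qy bxy; rewrite scalemx_sub.
have qz := lightlike_pair_timelike LQ qx qy bxy.
set z := x + _ *: y in qz.
have zW : (z <= W)%MS by rewrite addmx_sub // scalemx_sub.
have ez : z *m T = 1 *: z by rewrite fixed // mulmxDl -scalemxAl ex ey.
by case: (lightlike_no_timelike_eigvec xW nz qx zW ez qz).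
Qed.

Lemma timelike_eigvec_case x mu : (x <= W)%MS -> x *m T = mu *: x ->
  qform Q x < 0 -> x *m T = x /\ (W == x)%MS.
Proof.
move=> xW ex qx; rewrite ex (timelike_eigval LQ PO qx ex) scale1r.
by rewrite (timelike_eigvec_spans xW ex qx) xW.
Qed.

Lemma lightlike_fixed_case x : (x <= W)%MS -> x != 0 -> qform Q x = 0 ->
  x *m T = x -> ((W :&: kermx (T - 1%:M)) == x)%MS /\ (2 <= \rank W)%N.
Proof.
move=> xW nz qx ex; split; last exact: lightlike_rank_ge2 xW nz qx.
have fixedP y : (y <= kermx (T - 1%:M))%MS = (y *m T == y).
  by rewrite sub_kermx mulmxBr mulmx1 subr_eq0.
apply/andP; split; last by rewrite sub_capmx xW fixedP ex /=.
apply/row_subP => i; set y := row i _.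
have /andP[yW yK] : (y <= W)%MS && (y <= kermx (T - 1%:M))%MS.
  by rewrite -sub_capmx row_sub.
by apply: (fixed_sub_lightlike xW nz qx ex yW); apply/eqP; rewrite -fixedP.
Qed.

(* If x is a light-like eigenvector of W with eigenvalue mu, then W contains
   an eigenvector of eigenvalue mu^-1: T - mu^-1 maps W into the hyperplane
   of W orthogonal to x, which is proper since it misses the time-like
   vectors of W, so T - mu^-1 has a nonzero kernel on W. *)
Lemma inverse_eigvec x mu : (x <= W)%MS -> x != 0 -> qform Q x = 0 ->
  x *m T = mu *: x -> mu != 0 ->
  exists2 w : V, w != 0 & (w <= W)%MS /\ w *m T = mu^-1 *: w.
Proof.
move=> xW nz qx ex mu0; set c := mu^-1.
set H := (W :&: kermx (Q *m x^T))%MS.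
have [t tW qt] := W_timelike.
have img : (W *m (T - c%:M) <= H)%MS.
  apply/row_subP => i; rewrite row_mul; set y := row i W.
  have yW : (y <= W)%MS by apply: row_sub.
  rewrite sub_capmx sub_orth_kermx mulmxBr mul_mx_scalar.
  rewrite (addmx_sub (W_stable yW)) ?eqmx_opp ?scalemx_sub //=.
  by rewrite bformE gformBl gformZl -!bformE (bform_eigvec PO _ mu0 ex) subrr.
have rH : (\rank H < \rank W)%N.
  case: (mxrank_leqif_sup (capmxSl W (kermx (Q *m x^T)))) => le eq.
  rewrite ltn_neqAle le andbT eq; apply/negP => WH.
  have := submx_trans tW WH; rewrite sub_capmx sub_orth_kermx => /andP[_].
  by rewrite (bformC LQ) (negbTE (timelike_pair_neq0 LQ qt nz _)) // qx.
have rK : (0 < \rank (W :&: kermx (T - c%:M)))%N.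
  rewrite lt0n; apply: contraTneq rH => h0.
  by rewrite -leqNgt -(mxrank_mul_ker W (T - c%:M)) h0 addn0 mxrankS.
have [w wWK nw] : exists2 w : V, (w <= W :&: kermx (T - c%:M))%MS & w != 0.
  by apply/rowV0Pn; rewrite -mxrank_eq0 -lt0n.
exists w => //; split; first exact: submx_trans wWK (capmxSl _ _).
move/sub_kermxP: (submx_trans wWK (capmxSr _ _)).
by rewrite mulmxBr mul_mx_scalar => /eqP; rewrite subr_eq0 => /eqP.
Qed.

(* A light-like eigenvector x of W with eigenvalue lam != 1, together with
   an eigenvector w for lam^-1, spans an invariant plane containing the
   time-like vector x - <x, w> w; by minimality this plane is W. *)
Lemma W_hyperbolic x lam : (x <= W)%MS -> x != 0 -> qform Q x = 0 ->
  x *m T = lam *: x -> 0 < lam -> lam != 1 ->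
  exists w : V, [/\ lightlike Q w, w *m T = lam^-1 *: w,
                (W == col_mx x w)%MS & \rank W = 2%N].
Proof.
move=> xW nz qx ex lp l1.
have l0 : lam != 0 by rewrite gt_eqF.
have ll : lam * lam != 1 by apply: contra l1 => /eqP/(pos_sqr_eq1 lp)->.
have [w nw [wW ew]] := inverse_eigvec xW nz qx ex l0.
have qw : qform Q w = 0.
  by apply: (eigvec_lightlike PO ew); rewrite -invfM invr_eq1.
have bxw := eigvec_pair_nonorth LQ l0 ll nz nw qx qw ex ew.
have /andP[xU wU] : (x <= col_mx x w)%MS && (w <= col_mx x w)%MS.
  by rewrite -col_mx_sub submx_refl.
have UW : (col_mx x w <= W)%MS by rewrite col_mx_sub xW wW.
have WU : (W <= col_mx x w)%MS.
  apply: W_minimal UW.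
    by rewrite mul_col_mx col_mx_sub ex ew !scalemx_sub.
  exists (x + (- bform Q x w) *: w); last exact: lightlike_pair_timelike.
  by rewrite (addmx_sub xU) // scalemx_sub.
have eWU : (W == col_mx x w)%MS by rewrite WU UW.
exists w; split => //; apply/eqP; rewrite eqn_leq (lightlike_rank_ge2 xW nz qx).
by rewrite (eqmx_rank eWU) (leq_trans (rank_leq_row _)).
Qed.

End MinimalSubspace.

Lemma monic_irreducible_root (R : fieldType) (p : {poly R}) a :
  p \is monic -> irreducible_poly p -> p.[a] = 0 -> p = 'X - a%:P.
Proof.
move=> mp ip pa; have d : ('X - a%:P) %| p by rewrite dvdp_XsubCl; apply/rootP.
case: (irredp_XsubCP ip d) => [h|h].
  by move: (eqp_size h); rewrite size_XsubC size_poly1.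
by apply/eqP; rewrite eq_sym -eqp_monic // monicXsubC.
Qed.

Section PrimaryComponents.
Variables (R : rcfType) (n : nat) (T : 'M[R]_(n.+1)).
Local Notation V := 'rV[R]_(n.+1).
Implicit Types (x y u v w : V) (mu : R) (p : {poly R}).

Lemma eigvec_gen_eigenspace x mu : x *m T = mu *: x ->
  (x <= gen_eigenspace T mu)%MS.
Proof.
move=> ex; apply/sub_kermxP; rewrite (mulmx_horner_eigvec _ ex) horner_exp.
by rewrite hornerXsubC subrr expr0n scale0r.
Qed.

Lemma eigvec_primary_eq0 x mu p : x *m T = mu *: x -> p.[mu] != 0 ->
  (x <= primary T p)%MS -> x = 0.
Proof.
move=> ex pmu /sub_kermxP; rewrite (mulmx_horner_eigvec _ ex) horner_exp.
by move/eqP; rewrite scaler_eq0 expf_eq0 (negbTE pmu) andbF => /eqP.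
Qed.

Lemma eigvec_gen_eigenspace_eigval x mu lam : (x <= gen_eigenspace T mu)%MS ->
  x != 0 -> x *m T = lam *: x -> lam = mu.
Proof.
move=> xV nz ex; apply/eqP; rewrite -subr_eq0 -hornerXsubC.
by apply: contraNT nz => h; apply/eqP/(eigvec_primary_eq0 ex h xV).
Qed.

(* Generalized eigenspaces for distinct eigenvalues are independent:
   a Bezout relation between (X - a)^N and (X - b)^N kills their meet. *)
Lemma gen_eigenspace_direct a b : a != b ->
  mxdirect (gen_eigenspace T a + gen_eigenspace T b).
Proof.
move=> ab; apply/mxdirect_addsP/eqP; rewrite -submx0; apply/row_subP => i.
set y := row i _.
have /sub_kermxP ya : (y <= gen_eigenspace T a)%MS.
  exact: submx_trans (row_sub _ _) (capmxSl _ _).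
have /sub_kermxP yb : (y <= gen_eigenspace T b)%MS.
  exact: submx_trans (row_sub _ _) (capmxSr _ _).
have cop : coprimep (('X - a%:P) ^+ n.+1) (('X - b%:P) ^+ n.+1).
  by rewrite coprimep_expl // coprimep_expr // coprimep_XsubC root_XsubC eq_sym.
case/Bezout_eq1_coprimepP: cop => [[u1 u2]] /= e.
have -> : y = y *m horner_mx T (u1 * ('X - a%:P) ^+ n.+1 + u2 * ('X - b%:P) ^+ n.+1).
  by rewrite e rmorph1 mulmx1.
rewrite (mulrC u1) (mulrC u2) rmorphD !rmorphM /= mulmxDr !mulmxA ya yb.
by rewrite !mul0mx addr0 sub0mx.
Qed.

Variable Q : 'M[R]_(n.+1).
Hypothesis LQ : lorentz_form Q.
Hypothesis PO : in_PO Q T.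

Definition time_factor p : Prop :=
  char_factor T p /\ ~ posdef_on Q (primary T p).

Lemma time_part_factors Vt (s : seq {poly R}) : is_time_part Q T Vt ->
  uniq s -> (forall p, time_factor p <-> p \in s) ->
  (Vt == \sum_(p <- s) primary T p)%MS.
Proof.
move=> [ps [ups [mem eV]]] us Hs.
have pe : perm_eq ps s.
  by apply: uniq_perm => // p; apply/idP/idP => [/mem/Hs | /Hs/mem].
by rewrite (perm_big _ pe) in eV.
Qed.

Lemma time_factor_eigvec x mu : x != 0 -> qform Q x <= 0 -> x *m T = mu *: x ->
  time_factor ('X - mu%:P).
Proof.
move=> nz qx ex; split.
  split; first exact: monicXsubC.
  split; first exact: irredp_XsubC.
  rewrite dvdp_XsubCl -eigenvalue_root_char; apply/eigenvalueP; by exists x.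
by move=> pd; have := pd x (eigvec_gen_eigenspace ex) nz; rewrite ltNge qx.
Qed.

Lemma primary_orth_eigvec x y mu p : (y <= primary T p)%MS ->
  x *m T = mu *: x -> mu != 0 -> p.[mu^-1] != 0 -> bform Q y x = 0.
Proof.
move=> /sub_kermxP yP ex mu0 pm.
have := bform_horner_eigvec PO y (p ^+ n.+1) mu0 ex.
rewrite yP bformE gform0l horner_exp => /esym/eqP.
by rewrite mulf_eq0 expf_eq0 (negbTE pm) andbF => /eqP.
Qed.

(* If T fixes a nonzero non-space-like vector x, then V_t = V_1: every
   other primary component is orthogonal to x and contains no multiple of x,
   hence is space-like. *)
Lemma time_part_fixed Vt x : x != 0 -> qform Q x <= 0 -> x *m T = x ->
  is_time_part Q T Vt -> (Vt == gen_eigenspace T 1)%MS.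
Proof.
move=> nz qx ex TP; have ex1 : x *m T = 1 *: x by rewrite scale1r.
have := time_part_factors (s := [:: 'X - 1%:P]) TP isT.
rewrite big_seq1; apply=> p; rewrite inE; split; last first.
  by move/eqP->; apply: time_factor_eigvec nz qx ex1.
move=> [[mp [ip _]] npd]; have [p1|p1] := eqVneq p.[1] 0.
  by rewrite (monic_irreducible_root mp ip p1).
exfalso; apply: npd => v vP nv; rewrite ltNge; apply/negP => qv.
have bv : bform Q v x = 0.
  by apply: primary_orth_eigvec vP ex1 (oner_neq0 R) _; rewrite invr1.
have [a ea] := nonspacelike_orth_colinear LQ nz qx qv (etrans (bformC LQ x v) bv).
have ev : v *m T = 1 *: v by rewrite ea -scalemxAl ex1 !scale1r.
by move/eqP: nv; apply; apply: eigvec_primary_eq0 ev p1 vP.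
Qed.

(* If u, w are light-like eigenvectors for lam, lam^-1 (lam > 0, lam != 1),
   then V_t = V_lam + V_lam^-1: every other primary component is orthogonal
   to the time-like vector u - <u, w> w, hence space-like. *)
Lemma time_part_hyperbolic Vt lam u w : 0 < lam -> lam != 1 ->
  lightlike Q u -> lightlike Q w -> u *m T = lam *: u -> w *m T = lam^-1 *: w ->
  is_time_part Q T Vt ->
  (Vt == gen_eigenspace T lam + gen_eigenspace T lam^-1)%MS.
Proof.
move=> lp l1 [nu qu] [nw qw] eu ew TP.
have l0 : lam != 0 by rewrite gt_eqF.
have ll : lam * lam != 1 by apply: contra l1 => /eqP/(pos_sqr_eq1 lp)->.
have lli := pos_neq_inv lp l1.
have := time_part_factors (s := [:: 'X - lam%:P; 'X - lam^-1%:P]) TP.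
rewrite big_cons big_seq1; apply.
  by rewrite /= inE andbT (inj_eq (addrI _)) eqr_opp (inj_eq polyC_inj).
move=> p; rewrite !inE; split; last first.
  case/orP=> /eqP->; first by apply: time_factor_eigvec nu _ eu; rewrite qu.
  by apply: time_factor_eigvec nw _ ew; rewrite qw.
move=> [[mp [ip _]] npd].
have [pa|pa] := eqVneq p.[lam] 0.
  by rewrite (monic_irreducible_root mp ip pa) eqxx.
have [pb|pb] := eqVneq p.[lam^-1] 0.
  by rewrite (monic_irreducible_root mp ip pb) eqxx orbT.
exfalso; apply: npd => v vP nv.
have bu : bform Q v u = 0 by apply: primary_orth_eigvec vP eu l0 pb.
have bw : bform Q v w = 0.
  by apply: primary_orth_eigvec vP ew (invr_neq0 l0) _; rewrite invrK.
have bz := eigvec_pair_nonorth LQ l0 ll nu nw qu qw eu ew.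
have qz := lightlike_pair_timelike LQ qu qw bz.
apply: (orth_timelike_gt0 LQ qz _ nv).
by rewrite bformE gformDr gformZr -!bformE bu bw mulr0 addr0.
Qed.

End PrimaryComponents.

Section Classification.
Variables (R : rcfType) (n : nat) (Q T Vt W : 'M[R]_(n.+1)).
Local Notation V := 'rV[R]_(n.+1).

Definition case_fixed_timelike : Prop :=
  (Vt == gen_eigenspace T 1)%MS /\ \rank W = 1%N /\
  exists v : V, timelike Q v /\ v *m T = v /\ (W == v)%MS.

Definition case_fixed_lightlike : Prop :=
  (Vt == gen_eigenspace T 1)%MS /\ (2 <= \rank W)%N /\
  exists v : V, lightlike Q v /\ v *m T = v /\
    ((W :&: kermx (T - 1%:M)) == v)%MS.

Definition case_hyperbolic : Prop :=
  exists lam : R, 0 < lam /\ lam != 1 /\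
    (Vt == gen_eigenspace T lam + gen_eigenspace T lam^-1)%MS /\
    mxdirect (gen_eigenspace T lam + gen_eigenspace T lam^-1) /\
    \rank W = 2%N /\
    exists u w : V, lightlike Q u /\ lightlike Q w /\
      u *m T = lam *: u /\ w *m T = lam^-1 *: w /\ (W == col_mx u w)%MS.

Hypothesis LQ : lorentz_form Q.
Hypothesis PO : in_PO Q T.
Hypothesis TP : is_time_part Q T Vt.
Hypothesis MIN : minimal_inv_timelike Q T Vt W.

Lemma cases_exhaustive :
  case_fixed_timelike \/ case_fixed_lightlike \/ case_hyperbolic.
Proof.
have [x [mu [nz xW ex]]] := W_eigvec LQ PO MIN.
case: (ltgtP (qform Q x) 0) => qx.
- have [ex1 eWx] := timelike_eigvec_case LQ PO MIN xW ex qx.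
  left; split; first exact: (time_part_fixed LQ PO nz (ltW qx) ex1 TP).
  by split; [rewrite (eqmx_rank eWx) rank_rV nz | exists x].
- by case: (no_spacelike_eigvec LQ PO MIN xW ex qx).
have qx' : qform Q x <= 0 by rewrite qx.
have mp := eigval_gt0 LQ PO nz qx' ex.
have [m1|m1] := eqVneq mu 1.
  have ex1 : x *m T = x by rewrite ex m1 scale1r.
  have [eK r2] := lightlike_fixed_case LQ PO MIN xW nz qx ex1.
  right; left; split; first exact: (time_part_fixed LQ PO nz qx' ex1 TP).
  by split=> //; exists x.
have [w [lw ew eW r2]] := W_hyperbolic LQ PO MIN xW nz qx ex mp m1.
right; right; exists mu; do 2!split=> //.
split; first exact: (time_part_hyperbolic LQ PO mp m1 (conj nz qx) lw ex ew TP).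
split; first exact: (gen_eigenspace_direct T (pos_neq_inv mp m1)).
by split=> //; exists x, w.
Qed.

(* The cases are told apart by dim W and, for (ii) and (iii), by the
   eigenvalues on V_t. *)
Lemma cases_exclusive : (W <= Vt)%MS ->
  ~ (case_fixed_timelike /\ case_fixed_lightlike) /\
  ~ (case_fixed_timelike /\ case_hyperbolic) /\
  ~ (case_fixed_lightlike /\ case_hyperbolic).
Proof.
move=> WVt; split; first by move=> [[_ [r1 _]] [_ [r2 _]]]; move: r2; rewrite r1.
split; first by move=> [[_ [r1 _]] [lam [_ [_ [_ [_ [r2 _]]]]]]]; move: r2; rewrite r1.
move=> [[eV1 _] [lam [_ [l1 [_ [_ [_ [u [w [[nu _] [_ [eu [_ eW]]]]]]]]]]]]].
have uW : (u <= W)%MS by case/andP: eW => _; rewrite col_mx_sub => /andP[].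
have uV1 : (u <= gen_eigenspace T 1)%MS.
  by apply: submx_trans uW (submx_trans WVt _); case/andP: eV1.
by move/eqP: l1; apply; apply: eigvec_gen_eigenspace_eigval uV1 nu eu.
Qed.

End Classification.

Theorem theorem2p11 (R : rcfType) (n : nat) (Q T Vt W : 'M[R]_(n.+1)) :
  lorentz_form Q -> in_PO Q T -> is_time_part Q T Vt ->
  minimal_inv_timelike Q T Vt W ->
  let case1 :=
    (Vt == gen_eigenspace T 1)%MS /\ \rank W = 1%N /\
    exists v : 'rV[R]_(n.+1),
      timelike Q v /\ v *m T = v /\ (W == v)%MS in
  let case2 :=
    (Vt == gen_eigenspace T 1)%MS /\ (2 <= \rank W)%N /\
    exists v : 'rV[R]_(n.+1),
      lightlike Q v /\ v *m T = v /\
      ((W :&: kermx (T - 1%:M)) == v)%MS in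
  let case3 :=
    exists lam : R, 0 < lam /\ lam != 1 /\
      (Vt == gen_eigenspace T lam + gen_eigenspace T lam^-1)%MS /\
      mxdirect (gen_eigenspace T lam + gen_eigenspace T lam^-1) /\
      \rank W = 2%N /\
      exists u w : 'rV[R]_(n.+1),
        lightlike Q u /\ lightlike Q w /\
        u *m T = lam *: u /\ w *m T = lam^-1 *: w /\
        (W == col_mx u w)%MS in
  (case1 \/ case2 \/ case3) /\
  ~ (case1 /\ case2) /\ ~ (case1 /\ case3) /\ ~ (case2 /\ case3).
Proof.
move=> LQ PO TP MIN case1 case2 case3.
split; first exact: cases_exhaustive LQ PO TP MIN.
by apply: cases_exclusive; case: MIN.
Qed.
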